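(* Let $v_1,\dots,v_N,\tilde v$ be independent uniform templates in $\mathbb{Z}_2^n$ and $\varepsilon\ge0$. Let $\overline{W_N}$ denote the event ''$v_2\notin B_\varepsilon(v_1),\ v_3\notin B_\varepsilon(v_1)\cup B_\varepsilon(v_2),\ \dots,\ v_N\notin\bigcup_{k=1}^{N-1}B_\varepsilon(v_k)$''. Then $$NV_\varepsilon-\mathcal{I}^\varepsilon_{\varepsilon+1}\frac{N(N-1)}{2}\le\mathbb{P}\left(\tilde v\in\bigcup_{k=1}^N B_\varepsilon(v_k)\,\middle|\,\overline{W_N}\right)\le NV_\varepsilon.$$
   Context: $d_{\mathcal H}$ is the Hamming distance on $\mathbb{Z}_2^n$, $B_\varepsilon(t)=\{y:d_{\mathcal H}(t,y)\le\varepsilon\}$, $V_\varepsilon=\frac1{2^n}\sum_{k=0}^\varepsilon\binom nk$, and $\mathcal{I}^\varepsilon_d=|B_\varepsilon(u)\cap B_\varepsilon(v)|/2^n$ for any $u,v$ with $d_{\mathcal H}(u,v)=d$, explicitly $\mathcal{I}^\varepsilon_d=\frac{1}{2^n}\sum_{k=\max(0,d-\varepsilon)}^{\min(\varepsilon,d)}\sum_{i=0}^{\min(\varepsilon-k,\varepsilon-d+k)}\binom dk\binom{n-d}{i}$. *)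

From mathcomp Require Import all_boot all_order all_algebra.
Set Implicit Arguments. Unset Strict Implicit. Unset Printing Implicit Defensive.
Import Order.TTheory GRing.Theory Num.Theory.

Definition word (n : nat) := {ffun 'I_n -> bool}.

Definition dH (n : nat) (u v : word n) : nat := #|[set i | u i != v i]|.

Definition ball (n eps : nat) (t : word n) : {set word n} :=
  [set y | dH t y <= eps].

Local Open Scope ring_scope.

Definition Vol (R : fieldType) (n eps : nat) : R :=
  (\sum_(k < eps.+1) ('C(n, k))%:R) / (2 ^ n)%:R.

(* I^eps_d, explicit formula; lower index max(0,d-eps) = d - eps (truncated),
   upper inner index min(eps-k, eps-d+k), with eps-d+k written eps+k-d
   (nonnegative since k >= d - eps) *)
Definition Inter (R : fieldType) (n eps d : nat) : R :=
  (\sum_((d - eps)%N <= k < (minn eps d).+1)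
     \sum_(0 <= i < (minn (eps - k) (eps + k - d)).+1)
        ('C(d, k) * 'C(n - d, i))%:R) / (2 ^ n)%:R.

(* sample space: (v_1,...,v_N) and tilde v, uniform on a finite type *)
Definition Omega (n N : nat) := ({ffun 'I_N -> word n} * word n)%type.

Definition Pr (R : fieldType) (T : finType) (E : {set T}) : R :=
  #|E|%:R / #|T|%:R.

Definition condPr (R : fieldType) (T : finType) (A B : {set T}) : R :=
  Pr R (A :&: B) / Pr R B.

Definition WN (n N eps : nat) : {set Omega n N} :=
  [set w : Omega n N | [forall j : 'I_N, forall k : 'I_N,
              (k < j)%N ==> (w.1 j \notin ball eps (w.1 k))]].

Definition Hit (n N eps : nat) : {set Omega n N} :=
  [set w : Omega n N | [exists k : 'I_N, w.2 \in ball eps (w.1 k)]].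

(* Conditioned on the separation event, the templates are uniform on the
   eps-separated tuples v and the probe is independent of them, so the
   conditional probability is the mean over separated v of
   |B(v_1) u ... u B(v_N)| / 2^n.  The union bound gives the upper estimate
   and Bonferroni's inequality the lower one, because two balls whose centres
   are at distance d > eps meet in at most 2^n I_{eps+1} points: the
   intersection has exactly 2^n I_d points, and it can only grow when a
   coordinate of one centre is flipped towards the other. *)

From mathcomp Require Import all_boot all_order all_algebra.
From mathcomp Require Import zify.
Import Order.TTheory GRing.Theory Num.Theory.
Set Implicit Arguments. Unset Strict Implicit. Unset Printing Implicit Defensive.

Section UnionBounds.
Variable T : finType.

Lemma card_bigcup_le (I : finType) (P : pred I) (F : I -> {set T}) :
  #|\bigcup_(i | P i) F i| <= \sum_(i | P i) #|F i|.
Proof.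
apply: (big_ind2 (fun (A : {set T}) s => #|A| <= s)) => // [|A s B t sA tB].
  by rewrite cards0.
exact: leq_trans (leq_card_setU A B) (leq_add sA tB).
Qed.

Lemma bonferroni_card (F : nat -> {set T}) m :
  \sum_(k < m) #|F k| <=
    #|\bigcup_(k < m) F k| + \sum_(j < m) \sum_(k < j) #|F k :&: F j|.
Proof.
elim: m => [|m IHm]; first by rewrite !big_ord0.
rewrite !big_ord_recr /=.
apply: leq_trans (leq_add IHm (leqnn _)) _.
rewrite addnAC -cardsUI -addnA leq_add2l addnC leq_add2l.
rewrite setIC big_distrr /=; apply: leq_trans (card_bigcup_le _ _) _.
by apply: leq_sum => k _; rewrite setIC.
Qed.

End UnionBounds.

Section SplitCount.
Variables (T : finType) (D : {set T}).

Lemma card_draws_split k i :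
  #|[set S : {set T} | (#|S :&: D| == k) && (#|S :\: D| == i)]| =
    'C(#|D|, k) * 'C(#|~: D|, i).
Proof.
pose f S := (S :&: D, S :\: D).
have f_inj : injective f by move=> S1 S2 [eI eD]; rewrite -(setID S1 D) eI eD setID.
rewrite -!cards_draws -cardsX -(card_imset _ f_inj).
apply: eq_card => -[A B]; rewrite !inE /=; apply/imsetP/andP => [[S] | []].
  by rewrite inE => /andP[cA cB] [-> ->]; rewrite subsetIr subsetDr cA cB.
move=> /andP[sAD cA] /andP[sBD cB].
have fAB : f (A :|: B) = (A, B).
  have /eqP AD0 : A :\: D == set0 by rewrite setD_eq0.
  have BD0 : B :&: D = set0.
    by apply: disjoint_setI0; rewrite subsets_disjoint setCK in sBD.
  by rewrite /f setIUl setDUl (setIidPl sAD) AD0 BD0 setU0 set0U setDE (setIidPl sBD).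
exists (A :|: B) => //; move: fAB; rewrite inE /f => -[-> ->].
by rewrite cA cB.
Qed.

Lemma card_pred_split (Q : nat -> nat -> bool) K I :
  #|D| < K -> #|~: D| < I ->
  #|[set S : {set T} | Q #|S :&: D| #|S :\: D|]| =
    \sum_(0 <= k < K) \sum_(0 <= i < I | Q k i) 'C(#|D|, k) * 'C(#|~: D|, i).
Proof.
move=> DK DI; rewrite big_mkord; under eq_bigr do rewrite big_mkord.
transitivity (\sum_(k < K) \sum_(i < I) \sum_(S : {set T})
    [&& #|S :&: D| == k, #|S :\: D| == i & Q k i]); last first.
  apply: eq_bigr => k _; rewrite [RHS]big_mkcond; apply: eq_bigr => i _ /=.
  case: (Q k i); last by rewrite big1 // => S _; rewrite !andbF.
  rewrite -card_draws_split -sum1_card [RHS]big_mkcond.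
  by apply: eq_bigr => S _; rewrite inE andbT.
under eq_bigr => k _ do rewrite exchange_big.
rewrite exchange_big -sum1_card big_mkcond; apply: eq_bigr => S _; rewrite inE.
have aK : #|S :&: D| < K by apply: leq_ltn_trans DK; rewrite subset_leq_card ?subsetIr.
have bI : #|S :\: D| < I by apply: leq_ltn_trans DI; rewrite subset_leq_card ?subsetDr.
rewrite (bigD1 (Ordinal aK)) //= [X in _ + X]big1 ?addn0 => [|k]; last first.
  rewrite -val_eqE /= eq_sym => /negbTE kS.
  by apply: big1 => i _; rewrite kS.
rewrite (bigD1 (Ordinal bI)) //= [X in _ + X]big1 ?addn0 => [|i]; first by rewrite !eqxx.
by rewrite -val_eqE /= eq_sym => /negbTE ->; rewrite andbF.
Qed.

End SplitCount.

Section Hamming.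
Variable n : nat.
Implicit Types (u v y : word n) (S : {set 'I_n}).

Lemma dH_sym u v : dH u v = dH v u.
Proof. by apply: eq_card => i; rewrite !inE eq_sym. Qed.

Lemma dHxx u : dH u u = 0.
Proof. by apply: eq_card0 => i; rewrite !inE eqxx. Qed.

Definition diffset u y : {set 'I_n} := [set i | u i != y i].

Definition toggle u S : word n := [ffun i => if i \in S then ~~ u i else u i].

Lemma diffsetK u : cancel (diffset u) (toggle u).
Proof. by move=> y; apply/ffunP => i; rewrite ffunE inE; case: (u i); case: (y i). Qed.

Lemma toggleK u : cancel (toggle u) (diffset u).
Proof. by move=> S; apply/setP => i; rewrite inE ffunE; case: (i \in S); case: (u i). Qed.

Lemma card_set_diffset u (P : pred {set 'I_n}) :
  #|[set y | P (diffset u y)]| = #|[set S | P S]|.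
Proof.
rewrite -(card_imset _ (can_inj (toggleK u))).
rewrite (can2_imset_pre _ (toggleK u) (diffsetK u)).
by apply: eq_card => y; rewrite !inE.
Qed.

Lemma dH_toggle u v S :
  dH v (toggle u S) + #|S :&: diffset u v| = dH u v + #|S :\: diffset u v|.
Proof.
set D := diffset u v.
have -> : dH v (toggle u S) = #|(D :\: S) :|: (S :\: D)|.
  apply: eq_card => i; rewrite !inE ffunE.
  by case: (i \in S); case: (u i); case: (v i).
have DS_SD0 : (D :\: S) :&: (S :\: D) = set0.
  by apply/setP => i; rewrite in_setI !in_setD in_set0; case: (i \in S); case: (i \in D).
have := cardsUI (D :\: S) (S :\: D); rewrite DS_SD0 cards0 addn0 => ->.
by rewrite addnAC setIC [#|D :\: S| + _]addnC cardsID.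
Qed.

Definition flip (j : 'I_n) v : word n := toggle v [set j].

Lemma flipK j : involutive (flip j).
Proof. by move=> v; apply/ffunP => i; rewrite !ffunE inE; case: (i == j); rewrite ?negbK. Qed.

Lemma dH_flip u v j : dH u (flip j v) + (u j != v j) = dH u v + (u j == v j).
Proof.
rewrite /dH (cardsD1 j [set i | u i != flip j v i]) (cardsD1 j [set i | u i != v i]).
have -> : [set i | u i != flip j v i] :\ j = [set i | u i != v i] :\ j.
  by apply/setP => i; rewrite !inE ffunE inE; case: eqP.
by rewrite !inE ffunE inE eqxx; case: (u j); case: (v j) => /=; rewrite ?addn0 ?addn1.
Qed.

Lemma dH_flip2 u v j : dH (flip j u) (flip j v) = dH u v.
Proof.
by apply: eq_card => i; rewrite !inE !ffunE inE; case: (i == j); case: (u i); case: (v i).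
Qed.

Definition inter_count eps d : nat :=
  \sum_((d - eps) <= k < (minn eps d).+1)
     \sum_(0 <= i < (minn (eps - k) (eps + k - d)).+1) 'C(d, k) * 'C(n - d, i).

Lemma card_ballI eps u v :
  #|ball eps u :&: ball eps v| = inter_count eps (dH u v).
Proof.
set d := dH u v; set D := diffset u v.
pose Q k i := (k + i <= eps) && (d - k + i <= eps).
have Dd : #|D| = d by [].
have DC : #|~: D| = n - d by have := cardsC D; rewrite card_ord Dd; lia.
(* With S the coordinates where y differs from u,
   dH u y = |S :&: D| + |S :\: D| and dH v y = d - |S :&: D| + |S :\: D|. *)
have -> : ball eps u :&: ball eps v =
    [set y | (fun S => Q #|S :&: D| #|S :\: D|) (diffset u y)].
  apply/setP => y; rewrite !inE /Q.
  have := dH_toggle u v (diffset u y); rewrite diffsetK -/d -/D.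
  have := cardsID D (diffset u y).
  have : #|diffset u y :&: D| <= d by rewrite subset_leq_card ?subsetIr.
  have : dH u y = #|diffset u y| by [].
  lia.
rewrite (card_set_diffset u (fun S => Q #|S :&: D| #|S :\: D|)).
rewrite (@card_pred_split _ D Q d.+1 (n + eps).+1) ?Dd ?DC //; last by lia.
rewrite /inter_count [RHS](big_nat_widenl _ 0) // [RHS](big_nat_widen _ _ d.+1); last first.
  by rewrite ltnS geq_minr.
rewrite [RHS]big_mkcond; apply: eq_big_nat => k /andP[_ k_le] /=.
case: ifP => k_range.
  rewrite [RHS](big_nat_widen _ _ (n + eps).+1); last by lia.
  by apply: eq_bigl => i; rewrite /Q; lia.
by apply: big_pred0 => i; rewrite /Q; lia.
Qed.

Lemma card_ball eps u : #|ball eps u| = \sum_(k < eps.+1) 'C(n, k).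
Proof.
rewrite -[ball eps u]setIid card_ballI dHxx /inter_count sub0n minn0 big_nat1.
by rewrite !subn0 addn0 minnn big_mkord; apply: eq_bigr => i _; rewrite bin0 mul1n.
Qed.

Lemma card_ballI_flip eps u v j : u j != v j ->
  #|ball eps u :&: ball eps v| <= #|ball eps u :&: ball eps (flip j v)|.
Proof.
(* Points of the first intersection that leave ball eps v' are flipped at j,
   which moves them into ball eps v' and closer to u. *)
move=> uv_j; set v' := flip j v.
have escape y : y \in ball eps v -> y \notin ball eps v' -> y j = v j /\ dH v y = eps.
  rewrite !inE (dH_sym v) (dH_sym v') => yv yv'.
  have := dH_flip y v j; rewrite -/v'; move: yv yv'; case: (y j); case: (v j) => /=; lia.
pose phi y := if y \in ball eps v' then y else flip j y.
have phi_in y : y \in ball eps u :&: ball eps v -> phi y \in ball eps u :&: ball eps v'.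
  rewrite /phi inE => /andP[yu yv]; case: ifPn => yv'; first by rewrite inE yu.
  have [yv_j dvy] := escape y yv yv'.
  rewrite !inE /v' dH_flip2 dvy leqnn andbT.
  have := dH_flip u y j; rewrite inE in yu.
  by rewrite yv_j (negbTE uv_j) /=; lia.
have no_collision y z : y \in ball eps v -> z \in ball eps v -> z \notin ball eps v' ->
    y != flip j z.
  move=> yv zv zv'; have [zv_j dvz] := escape z zv zv'.
  apply: contraTneq yv => ->; rewrite inE -ltnNge.
  by have := dH_flip v z j; rewrite zv_j eqxx /=; lia.
have phi_inj : {in ball eps u :&: ball eps v &, injective phi}.
  move=> y z /setIP[_ yv] /setIP[_ zv]; rewrite /phi.
  case: ifPn => yv'; case: ifPn => zv' yz.
  - exact: yz.
  - by have := no_collision y z yv zv zv'; rewrite yz eqxx.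
  - by have := no_collision z y zv yv yv'; rewrite yz eqxx.
  - exact: (can_inj (flipK j)).
rewrite -(card_in_imset phi_inj); apply/subset_leq_card/subsetP => _ /imsetP[y Ay ->].
exact: phi_in.
Qed.

Lemma card_ballI_le eps u v d : d <= dH u v ->
  #|ball eps u :&: ball eps v| <= inter_count eps d.
Proof.
move/subnK; move: (dH u v - d) => k; elim: k v => [|k IHk] v duv.
  by rewrite card_ballI -duv.
have [j uv_j] : exists j, u j != v j.
  have : 0 < dH u v by rewrite -duv addSn.
  by rewrite card_gt0 => /set0Pn[j]; rewrite inE; exists j.
apply: leq_trans (card_ballI_flip eps uv_j) (IHk _ _).
by have := dH_flip u v j; rewrite uv_j -duv (negbTE uv_j) addSn; lia.
Qed.

End Hamming.

Section Templates.
Variables n N eps : nat.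
Implicit Type v : {ffun 'I_N -> word n}.

Definition separated : {set {ffun 'I_N -> word n}} :=
  [set v : {ffun 'I_N -> word n} |
    [forall j : 'I_N, forall k : 'I_N, (k < j) ==> (v j \notin ball eps (v k))]].

Definition covered v : {set word n} := [set y | [exists k, y \in ball eps (v k)]].

(* The balls as a nat-indexed family, as required by [bonferroni_card]. *)
Definition template_ball v (k : nat) : {set word n} :=
  if insub k is Some i then ball eps (v i) else set0.

Lemma template_ballE v (i : 'I_N) : template_ball v i = ball eps (v i).
Proof. by rewrite /template_ball valK. Qed.

Lemma covered_bigcup v : covered v = \bigcup_(k < N) template_ball v k.
Proof.
apply/setP => y; rewrite inE; apply/existsP/bigcupP => [[k yk] | [k _]].
  by exists k; rewrite ?template_ballE.
by rewrite template_ballE; exists k.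
Qed.

Lemma sum_card_template_ball v :
  \sum_(k < N) #|template_ball v k| = N * \sum_(k < eps.+1) 'C(n, k).
Proof.
under eq_bigr => k _ do rewrite template_ballE card_ball.
by rewrite sum_nat_const card_ord.
Qed.

Lemma card_covered_le v : #|covered v| <= N * \sum_(k < eps.+1) 'C(n, k).
Proof. by rewrite covered_bigcup -(sum_card_template_ball v) card_bigcup_le. Qed.

Lemma card_covered_ge v : v \in separated ->
  N * \sum_(k < eps.+1) 'C(n, k) <= #|covered v| + inter_count n eps eps.+1 * 'C(N, 2).
Proof.
rewrite inE => /forallP sep_v.
rewrite -(sum_card_template_ball v) covered_bigcup.
apply: leq_trans (bonferroni_card _ _) _; rewrite leq_add2l.
rewrite -bin2_sum big_mkord big_distrr /=; apply: leq_sum => j _.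
apply: (@leq_trans (\sum_(k < j) inter_count n eps eps.+1)); last first.
  by rewrite sum_nat_const card_ord mulnC.
apply: leq_sum => k _; have kN : k < N := ltn_trans (ltn_ord k) (ltn_ord j).
have -> : template_ball v k = ball eps (v (Ordinal kN)).
  exact: (template_ballE v (Ordinal kN)).
rewrite template_ballE; apply: card_ballI_le.
by have /forallP/(_ (Ordinal kN)) := sep_v j; rewrite /= ltn_ord inE ltnNge.
Qed.

Lemma WN_separated : WN n N eps = setX separated [set: word n].
Proof. by apply/setP => -[v y]; rewrite !inE andbT. Qed.

Lemma card_WN : #|WN n N eps| = #|separated| * 2 ^ n.
Proof. by rewrite WN_separated cardsX cardsT card_ffun card_bool card_ord. Qed.

Lemma card_Hit_WN :
  #|Hit n N eps :&: WN n N eps| = \sum_(v in separated) #|covered v|.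
Proof.
rewrite WN_separated -sum1_card big_mkcond /=.
set HW := Hit n N eps :&: _.
rewrite (eq_bigr (fun w => if (w.1, w.2) \in HW then 1 else 0)); last by case.
rewrite -(pair_bigA _ (fun v y => if (v, y) \in HW then 1 else 0)) [RHS]big_mkcond.
apply: eq_bigr => v _; case: ifPn => sep_v; last first.
  by apply: big1 => y _; rewrite in_setI in_setX (negbTE sep_v) andbF.
rewrite -sum1_card [RHS]big_mkcond; apply: eq_bigr => y _.
by rewrite in_setI in_setX sep_v in_setT !andbT !inE.
Qed.

End Templates.

Local Open Scope ring_scope.

Section Averages.
Variable R : numFieldType.

Lemma condPrE (T : finType) (A B : {set T}) :
  condPr R A B = #|A :&: B|%:R / #|B|%:R.
Proof.
rewrite /condPr /Pr; have [T0 | T_gt0] := posnP #|T|.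
  have card0 (C : {set T}) : #|C| = 0 by apply/eqP; rewrite -leqn0 -T0 max_card.
  by rewrite !card0 !mul0r.
by rewrite invf_div mulrA divfK // pnatr_eq0 -lt0n.
Qed.

Lemma mean_bounds (T : finType) (A : {set T}) (f : T -> R) lo hi :
  (0 < #|A|)%N -> (forall x, x \in A -> lo <= f x <= hi) ->
  lo <= (\sum_(x in A) f x) / #|A|%:R <= hi.
Proof.
move=> A_gt0 f_bounds; have A_pos : 0 < #|A|%:R :> R by rewrite ltr0n.
rewrite ler_pdivlMr // ler_pdivrMr // !mulr_natr -!sumr_const.
by apply/andP; split; apply: ler_sum => x /f_bounds /andP[].
Qed.

Lemma bin2_natr N : 'C(N, 2)%:R = N%:R * (N%:R - 1) / 2 :> R.
Proof.
case: N => [|N]; first by rewrite mul0r mul0r.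
have : ('C(N.+1, 2) * 2 = N.+1 * N)%N by rewrite mulnC mul_bin_left bin1 subn1 mulnC.
move/(congr1 (fun m => m%:R : R)); rewrite !natrM => E.
have -> : N.+1%:R - 1 = N%:R :> R by rewrite -natr1 addrK.
by rewrite -E mulfK // pnatr_eq0.
Qed.

End Averages.

Lemma VolE (R : fieldType) n eps :
  Vol R n eps = (\sum_(k < eps.+1) 'C(n, k))%:R / (2 ^ n)%:R.
Proof. by rewrite /Vol natr_sum. Qed.

Lemma InterE (R : fieldType) n eps d :
  Inter R n eps d = (inter_count n eps d)%:R / (2 ^ n)%:R.
Proof. by rewrite /Inter natr_sum; under eq_bigr do rewrite natr_sum. Qed.

Lemma condPr_Hit_WN (R : numFieldType) n N eps :
  condPr R (Hit n N eps) (WN n N eps) =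
  (\sum_(v in separated n N eps) (#|covered eps v|%:R / (2 ^ n)%:R))
    / #|separated n N eps|%:R.
Proof.
by rewrite condPrE card_Hit_WN card_WN natrM natr_sum -mulr_suml invfM mulrA mulrAC.
Qed.

Unset Implicit Arguments. Set Strict Implicit.

Theorem lemma4p10 (R : realFieldType) (n N eps : nat) :
  0 < Pr R (WN n N eps) ->
  N%:R * Vol R n eps - Inter R n eps eps.+1 * (N%:R * (N%:R - 1) / 2)
    <= condPr R (Hit n N eps) (WN n N eps)
  /\ condPr R (Hit n N eps) (WN n N eps) <= N%:R * Vol R n eps.
Proof.
move=> PrW_gt0.
have sep_gt0 : (0 < #|separated n N eps|)%N.
  rewrite lt0n; apply: contraTneq PrW_gt0 => sep0.
  by rewrite /Pr card_WN sep0 mul0n mul0r ltxx.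
apply/andP; rewrite condPr_Hit_WN; apply: mean_bounds => // v sep_v.
have p_gt0 : 0 < ((2 ^ n)%:R : R)^-1 by rewrite invr_gt0 ltr0n expn_gt0.
rewrite VolE InterE -bin2_natr mulrA -natrM mulrAC -natrM -mulrBl !ler_pM2r //.
by rewrite lerBlDr -natrD !ler_nat card_covered_le card_covered_ge.
Qed.
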